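(* For every ATL*_i formula φ and every concurrent game structure G in which each agent is assigned an equivalence relation on positions, it holds that G ⊨ φ iff G' ⊨ tr(φ).
   Context: ATL*_i is ATL* with imperfect-information, perfect-recall strategies (objective semantics), where each agent a_i has an indistinguishability relation; ⟨⟨A⟩⟩ψ means there are strategies for the agents in A such that ψ holds whatever the other agents do. tr : ATL*_i → SL_i (Strategy Logic with imperfect information) replaces each subformula ⟨⟨A⟩⟩ψ, with A = {a_1,…,a_k} and the remaining agents a_{k+1},…,a_n, by ∃^{o_1}x_1 … ∃^{o_k}x_k ∀^{o_p}x_{k+1} … ∀^{o_p}x_n (a_1,x_1)…(a_n,x_n) tr(ψ). G' is the concurrent game structure with imperfect information obtained from G by interpreting each observation symbol o_i as the equivalence relation of agent a_i in G, and o_p as the identity relation. In SL_i, ∃^o x quantifies over perfect-recall strategies uniform w.r.t. the relation denoted by o, (a,x) binds agent a to strategy x, and ∀^o x = ¬∃^o x ¬. *)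

From HB Require Import structures.
From mathcomp Require Import all_boot.
Set Implicit Arguments. Unset Strict Implicit. Unset Printing Implicit Defensive.

Record cgs (Ag : finType) (AP : Type) (V Ac : finType) := CGS {
  cgs_move  : V -> (Ag -> Ac) -> V;
  cgs_label : V -> AP -> bool;
  cgs_init  : V;
  cgs_act_ne : inhabited Ac }.

Definition strategy (V Ac : finType) := seq V -> Ac.

Definition uniform (V Ac : finType) (r : rel V) (s : strategy V Ac) : Prop :=
  forall rho rho' : seq V, all2 r rho rho' -> s rho = s rho'.

Definition cur Ag AP (V Ac : finType) (G : cgs Ag AP V Ac) (rho : seq V) : V :=
  last (cgs_init G) rho.

Definition prefix (V : Type) (pi : nat -> V) (k : nat) : seq V := mkseq pi k.+1.

Record cgsi (Ag : finType) (AP : Type) (V Ac : finType) := CGSi {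
  cgsi_base : cgs Ag AP V Ac;
  cgsi_obs : Ag -> rel V;
  cgsi_obs_equiv : forall a, equivalence_rel (cgsi_obs a) }.

Inductive atl_state (Ag : finType) (AP : Type) : Type :=
  | AAtom of AP
  | ANot of atl_state Ag AP
  | AOr of atl_state Ag AP & atl_state Ag AP
  | ACoal of {set Ag} & atl_path Ag AP
with atl_path (Ag : finType) (AP : Type) : Type :=
  | PState of atl_state Ag AP
  | PNot of atl_path Ag AP
  | POr of atl_path Ag AP & atl_path Ag AP
  | PNext of atl_path Ag AP
  | PUntil of atl_path Ag AP & atl_path Ag AP.

Definition atl_out Ag AP (V Ac : finType) (G : cgs Ag AP V Ac) (rho : seq V)
    (A : {set Ag}) (sg : Ag -> strategy V Ac) (pi : nat -> V) : Prop :=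
  (forall k, k < size rho -> pi k = nth (cgs_init G) rho k) /\
  (forall k, size rho <= k.+1 ->
     exists c : Ag -> Ac,
       (forall a, a \in A -> c a = sg a (prefix pi k)) /\
       pi k.+1 = cgs_move G (pi k) c).

(* Objective semantics, perfect recall. *)
Fixpoint atl_sat_s Ag AP (V Ac : finType) (G : cgsi Ag AP V Ac) (rho : seq V)
    (phi : atl_state Ag AP) {struct phi} : Prop :=
  match phi with
  | AAtom p => cgs_label (cgsi_base G) (cur (cgsi_base G) rho) p
  | ANot f => ~ atl_sat_s G rho f
  | AOr f1 f2 => atl_sat_s G rho f1 \/ atl_sat_s G rho f2
  | ACoal A psi =>
      exists sg : Ag -> strategy V Ac,
        (forall a, a \in A -> uniform (cgsi_obs G a) (sg a)) /\
        forall pi, atl_out (cgsi_base G) rho A sg pi ->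
          atl_sat_p G pi (size rho).-1 psi
  end
with atl_sat_p Ag AP (V Ac : finType) (G : cgsi Ag AP V Ac) (pi : nat -> V)
    (i : nat) (psi : atl_path Ag AP) {struct psi} : Prop :=
  match psi with
  | PState f => atl_sat_s G (prefix pi i) f
  | PNot p => ~ atl_sat_p G pi i p
  | POr p1 p2 => atl_sat_p G pi i p1 \/ atl_sat_p G pi i p2
  | PNext p => atl_sat_p G pi i.+1 p
  | PUntil p1 p2 =>
      exists j, i <= j /\ atl_sat_p G pi j p2 /\
        forall k, i <= k < j -> atl_sat_p G pi k p1
  end.

Definition atl_models Ag AP (V Ac : finType) (G : cgsi Ag AP V Ac)
    (phi : atl_state Ag AP) : Prop :=
  atl_sat_s G [:: cgs_init (cgsi_base G)] phi.

Inductive sl_form (Obs Var Ag AP : Type) : Type :=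
  | SLAtom of AP
  | SLNot of sl_form Obs Var Ag AP
  | SLOr of sl_form Obs Var Ag AP & sl_form Obs Var Ag AP
  | SLEx of Obs & Var & sl_form Obs Var Ag AP
  | SLBind of Ag & Var & sl_form Obs Var Ag AP
  | SLNext of sl_form Obs Var Ag AP
  | SLUntil of sl_form Obs Var Ag AP & sl_form Obs Var Ag AP.

Definition SLAll (Obs Var Ag AP : Type) (o : Obs) (x : Var)
    (f : sl_form Obs Var Ag AP) : sl_form Obs Var Ag AP :=
  SLNot (SLEx o x (SLNot f)).

Record cgso (Obs : Type) (Ag : finType) (AP : Type) (V Ac : finType) := CGSo {
  cgso_base : cgs Ag AP V Ac;
  cgso_obs : Obs -> rel V;
  cgso_obs_equiv : forall o, equivalence_rel (cgso_obs o) }.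

Fixpoint sl_out Ag AP (V Ac : finType) (G : cgs Ag AP V Ac)
    (sg : Ag -> strategy V Ac) (rho : seq V) (n : nat) : seq V :=
  match n with
  | 0 => rho
  | n'.+1 => let r := sl_out G sg rho n' in
             rcons r (cgs_move G (cur G r) (fun a => sg a r))
  end.

(* Temporal operators require
   every agent to be bound (otherwise the outcome is undefined in the paper;
   here they are then false), and binding an unbound variable is false. *)
Fixpoint sl_sat (Obs : Type) (Var : eqType) (Ag : finType) AP (V Ac : finType)
    (G : cgso Obs Ag AP V Ac)
    (nv : Var -> option (strategy V Ac)) (na : Ag -> option (strategy V Ac))
    (rho : seq V) (phi : sl_form Obs Var Ag AP) {struct phi} : Prop :=
  match phi with
  | SLAtom p => cgs_label (cgso_base G) (cur (cgso_base G) rho) p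
  | SLNot f => ~ sl_sat G nv na rho f
  | SLOr f1 f2 => sl_sat G nv na rho f1 \/ sl_sat G nv na rho f2
  | SLEx o x f =>
      exists s : strategy V Ac, uniform (cgso_obs G o) s /\
        sl_sat G (fun y => if y == x then Some s else nv y) na rho f
  | SLBind a x f =>
      match nv x with
      | Some s => sl_sat G nv (fun b => if b == a then Some s else na b) rho f
      | None => False
      end
  | SLNext f =>
      exists sg : Ag -> strategy V Ac, (forall a, na a = Some (sg a)) /\
        sl_sat G nv na (sl_out (cgso_base G) sg rho 1) f
  | SLUntil f1 f2 =>
      exists sg : Ag -> strategy V Ac, (forall a, na a = Some (sg a)) /\
        exists i, sl_sat G nv na (sl_out (cgso_base G) sg rho i) f2 /\
          forall j, j < i -> sl_sat G nv na (sl_out (cgso_base G) sg rho j) f1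
  end.

Definition sl_models (Obs : Type) (Var : eqType) (Ag : finType) AP (V Ac : finType)
    (G : cgso Obs Ag AP V Ac) (phi : sl_form Obs Var Ag AP) : Prop :=
  sl_sat G (fun _ => None) (fun _ => None) [:: cgs_init (cgso_base G)] phi.

(* G' : observation symbols  Some a = o_a  (relation of agent a),      *)
(*      None = o_p (identity relation).                                *)
Definition obs_of_agents Ag AP (V Ac : finType) (G : cgsi Ag AP V Ac)
    (o : option Ag) : rel V :=
  match o with
  | Some a => cgsi_obs G a
  | None => fun x y => x == y
  end.

Lemma obs_of_agents_equiv Ag AP (V Ac : finType) (G : cgsi Ag AP V Ac) o :
  equivalence_rel (obs_of_agents G o).
Proof.
case: o => [a|]; first exact: cgsi_obs_equiv.
move=> x y z /=; split; first exact: eqxx.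
by move/eqP->.
Qed.

Definition G' Ag AP (V Ac : finType) (G : cgsi Ag AP V Ac) :
    cgso (option Ag) Ag AP V Ac :=
  CGSo (cgsi_base G) (obs_of_agents_equiv G).

(* Translation tr : ATL*_i -> SL_i.  Variable x_i is the agent a_i     *)
(* itself (Var := Ag), so x_1..x_n are pairwise distinct.              *)
Fixpoint tr_s (Ag : finType) AP (phi : atl_state Ag AP) {struct phi}
    : sl_form (option Ag) Ag Ag AP :=
  match phi with
  | AAtom p => SLAtom _ _ _ p
  | ANot f => SLNot (tr_s f)
  | AOr f1 f2 => SLOr (tr_s f1) (tr_s f2)
  | ACoal A psi =>
      let binds := foldr (fun a f => SLBind a a f) (tr_p psi) (enum Ag) in
      let univ := foldr (fun a f => SLAll None a f) binds
                        [seq a <- enum Ag | a \notin A] in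
      foldr (fun a f => SLEx (Some a) a f) univ [seq a <- enum Ag | a \in A]
  end
with tr_p (Ag : finType) AP (psi : atl_path Ag AP) {struct psi}
    : sl_form (option Ag) Ag Ag AP :=
  match psi with
  | PState f => tr_s f
  | PNot p => SLNot (tr_p p)
  | POr p1 p2 => SLOr (tr_p p1) (tr_p p2)
  | PNext p => SLNext (tr_p p)
  | PUntil p1 p2 => SLUntil (tr_p p1) (tr_p p2)
  end.

From mathcomp Require Import all_boot.
From mathcomp Require Import zify.
From Stdlib Require Import Classical FunctionalExtensionality.
Set Implicit Arguments. Unset Strict Implicit. Unset Printing Implicit Defensive.

(* The translation commutes with every connective except the strategic quantifier, so
   the proof is a simultaneous induction on state and path formulas, path formulas being
   evaluated along the outcome of a complete strategy profile.  For <<A>>psi, the prefix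
   "exists^{o_a} x_a (a in A), forall^{o_p} x_b (b notin A), bind every agent" says that
   some uniform sigma_A makes tr(psi) hold on the outcome of every completion
   (sigma_A, sigma_B); the universal quantifiers range over all strategies since every
   strategy is uniform for the identity relation o_p.  This agrees with ATL*_i because
   Out(rho, sigma_A) consists exactly of such outcomes: the outcome of a completion is
   consistent with sigma_A and, conversely, along a play consistent with sigma_A the other
   agents can replay, at each of its prefixes, actions producing its next position. *)

Section AssignOn.

Variables (I : eqType) (T : Type).

Definition assign_on (l : seq I) (s : I -> T) (f : I -> option T) : I -> option T :=
  fun y => if y \in l then Some (s y) else f y.

Lemma eq_assign_on l s s' f : {in l, s =1 s'} -> assign_on l s f = assign_on l s' f.
Proof.
move=> ss'; apply: functional_extensionality => y.
by rewrite /assign_on; case: ifP => // /ss' ->.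
Qed.

Lemma assign_on_update l x s t f :
  assign_on l s (fun y => if y == x then Some t else f y) =
  assign_on (x :: l) (fun y => if y \in l then s y else t) f.
Proof.
apply: functional_extensionality => y; rewrite /assign_on in_cons.
by case: (eqVneq y x) => [->|_]; case: (_ \in l).
Qed.

Lemma assign_on_update_self l x s f :
  assign_on l s (fun y => if y == x then Some (s x) else f y) = assign_on (x :: l) s f.
Proof.
rewrite assign_on_update; apply: eq_assign_on => y.
by rewrite in_cons; case: ifP => // _ /predU1P[->|].
Qed.

End AssignOn.

Lemma assign_on_enum (I : finType) (T : Type) (s : I -> T) f :
  assign_on (enum I) s f = fun y => Some (s y).
Proof. by apply: functional_extensionality => y; rewrite /assign_on mem_enum. Qed.

Lemma uniform_eq (V Ac : finType) (s : strategy V Ac) : uniform (fun x y => x == y) s.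
Proof. by move=> rho rho'; rewrite -eqseq_all => /eqP ->. Qed.

Lemma prefixS (T : Type) (pi : nat -> T) k :
  prefix pi k.+1 = rcons (prefix pi k) (pi k.+1).
Proof. by rewrite /prefix /mkseq -addn1 iotaD map_cat cats1. Qed.

Lemma size_prefix (T : Type) (pi : nat -> T) k : size (prefix pi k) = k.+1.
Proof. exact: size_mkseq. Qed.

Lemma last_prefix (T : Type) (x0 : T) pi k : last x0 (prefix pi k) = pi k.
Proof. by case: k => [|k]; rewrite ?prefixS ?last_rcons. Qed.

Section Outcomes.

Variables (Ag : finType) (AP : Type) (V Ac : finType) (G0 : cgs Ag AP V Ac).
Implicit Types (A : {set Ag}) (sg sA sB : Ag -> strategy V Ac) (rho : seq V) (pi : nat -> V).

Lemma size_sl_out sg rho n : size (sl_out G0 sg rho n) = size rho + n.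
Proof. by elim: n => [|n IH] /=; rewrite ?addn0 // size_rcons IH addnS. Qed.

Lemma sl_out_add sg rho m n :
  sl_out G0 sg (sl_out G0 sg rho m) n = sl_out G0 sg rho (n + m).
Proof. by elim: n => [|n IH] //; rewrite addSn /= IH. Qed.

Lemma nth_sl_out sg rho m n x0 k : m <= n -> k < size rho + m ->
  nth x0 (sl_out G0 sg rho n) k = nth x0 (sl_out G0 sg rho m) k.
Proof.
move=> + km; elim: n => [|n IH]; first by rewrite leqn0 => /eqP->.
rewrite leq_eqVlt => /predU1P[->//|]; rewrite ltnS => mn.
by rewrite /= nth_rcons size_sl_out ifT ?IH //; lia.
Qed.

Lemma sl_out_neq0 sg rho n : rho != [::] -> sl_out G0 sg rho n != [::].
Proof. by rewrite -!size_eq0 size_sl_out addn_eq0 => /negbTE ->. Qed.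

Definition outcome sg rho pi : Prop :=
  forall n, prefix pi ((size rho).-1 + n) = sl_out G0 sg rho n.

Definition play sg rho k : V :=
  nth (cgs_init G0) (sl_out G0 sg rho (k.+1 - size rho)) k.

Lemma outcome_play sg rho : rho != [::] -> outcome sg rho (play sg rho).
Proof.
case: rho => // x r _ n; apply: (@eq_from_nth _ (cgs_init G0)).
  by rewrite size_prefix size_sl_out /= addSn.
move=> k; rewrite size_prefix /= => lt_k.
rewrite nth_mkseq // /play; symmetry; apply: nth_sl_out => /=; lia.
Qed.

Definition combine (A : {set Ag}) sA sB : Ag -> strategy V Ac :=
  fun b => if b \in A then sA b else sB b.

Lemma atl_out_play A sA sB rho :
  rho != [::] -> atl_out G0 rho A sA (play (combine A sA sB) rho).
Proof.
move=> rho_ne; set sg := combine A sA sB; have out := outcome_play sg rho_ne.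
case: rho rho_ne out => // x r _ out; split=> k /= bound_k.
  by rewrite /play (_ : _ - _ = 0) //=; lia.
exists (fun a => sg a (prefix (play sg (x :: r)) k)); split.
  by move=> a aA; rewrite /sg /combine aA.
have [n ->] : exists n, k = size r + n by exists (k - size r); lia.
have := out n.+1; rewrite addnS prefixS out [sl_out _ _ _ n.+1]/= => /rcons_inj [->].
by rewrite /cur -out last_prefix.
Qed.

Definition step_fits A sA pi k (c : {ffun Ag -> Ac}) : bool :=
  [forall a in A, c a == sA a (prefix pi k)] && (pi k.+1 == cgs_move G0 (pi k) c).

(* At the history [prefix pi k], the agents outside [A] replay an action profile that
   produces [pi k.+1]. *)
Definition completion A sA pi : Ag -> strategy V Ac :=
  fun b h => if [pick c | step_fits A sA pi (size h).-1 c] is Some c then c b else sA b h.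

Lemma atl_out_outcome A sA rho pi : rho != [::] ->
  atl_out G0 rho A sA pi -> outcome (combine A sA (completion A sA pi)) rho pi.
Proof.
case: rho => // x r _ [pi_rho pi_step].
elim=> [|n IH].
  rewrite addn0; apply: (@eq_from_nth _ (cgs_init G0)); first by rewrite size_prefix.
  by move=> k; rewrite size_prefix => lt_k; rewrite nth_mkseq // pi_rho.
rewrite addnS prefixS IH /=; congr rcons.
rewrite /cur -IH last_prefix; set k := _ + n.
have [c fit_c pick_c] :
    exists2 c, step_fits A sA pi k c & [pick c | step_fits A sA pi k c] = Some c.
  case: pickP => [c fit_c | no_fit]; first by exists c.
  have [c [cA c_step]] := pi_step k (leq_addr _ _).
  suff : step_fits A sA pi k [ffun a => c a] by rewrite no_fit.
  apply/andP; split; first by apply/forallP => a; apply/implyP => aA; rewrite ffunE cA.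
  rewrite c_step; apply/eqP; congr cgs_move.
  by apply: functional_extensionality => a; rewrite ffunE.
case/andP: fit_c => /forallP cA /eqP ->; congr cgs_move.
apply: functional_extensionality => a; rewrite /combine.
case: ifP => aA; last by rewrite /completion size_prefix pick_c.
by have /implyP/(_ aA)/eqP := cA a.
Qed.

End Outcomes.

Section QuantifierBlocks.

Variables (Obs : Type) (Ag : finType) (AP : Type) (V Ac : finType).
Variable O : cgso Obs Ag AP V Ac.
Implicit Types (nv na : Ag -> option (strategy V Ac)) (rho : seq V).
Implicit Types (F : sl_form Obs Ag Ag AP) (l : seq Ag).

Lemma sl_sat_exists_block (o : Ag -> Obs) l F nv na rho :
  sl_sat O nv na rho (foldr (fun a f => SLEx (o a) a f) F l) <->
  exists s : Ag -> strategy V Ac,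
    (forall a, a \in l -> uniform (cgso_obs O (o a)) (s a)) /\
    sl_sat O (assign_on l s nv) na rho F.
Proof.
elim: l nv => [|x l IH] nv /=.
  split=> [F_nv | [s [_ //]]].
  by have [ac] := cgs_act_ne (cgso_base O); exists (fun _ _ => ac).
split=> [[s0 [s0_unif /(IH _) [s [s_unif F_s]]]] | [s [s_unif F_s]]].
  exists (fun y => if y \in l then s y else s0); split; last by rewrite -assign_on_update.
  by move=> a; rewrite in_cons; case: ifP => [/s_unif | _ /predU1P[->|]].
exists (s x); split; first by apply: s_unif; rewrite mem_head.
apply/IH; exists s; split; last by rewrite assign_on_update_self.
by move=> a al; apply: s_unif; rewrite in_cons al orbT.
Qed.

Lemma sl_sat_forall_block (o : Obs) l F nv na rho :
  (forall s : strategy V Ac, uniform (cgso_obs O o) s) ->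
  sl_sat O nv na rho (foldr (fun a f => SLAll o a f) F l) <->
  forall s : Ag -> strategy V Ac, sl_sat O (assign_on l s nv) na rho F.
Proof.
move=> all_unif; elim: l nv => [|x l IH] nv /=.
  split=> [F_nv s // | F_all].
  by have [ac] := cgs_act_ne (cgso_base O); apply: (F_all (fun _ _ => ac)).
split=> [F_nv s | F_all [s0 [_]]]; last first.
  by apply; apply/IH => s; rewrite assign_on_update.
rewrite -assign_on_update_self; apply: (iffLR (IH _)).
by apply: NNPP => F_x; apply: F_nv; exists (s x).
Qed.

Lemma sl_sat_bind_block l F (t : Ag -> strategy V Ac) na rho :
  sl_sat O (fun y => Some (t y)) na rho (foldr (fun a f => SLBind a a f) F l) <->
  sl_sat O (fun y => Some (t y)) (assign_on l t na) rho F.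
Proof. by elim: l na => [|x l IH] na //=; rewrite IH assign_on_update_self. Qed.

Lemma sl_sat_next_total (sg : Ag -> strategy V Ac) nv rho F :
  sl_sat O nv (fun a => Some (sg a)) rho (SLNext F) <->
  sl_sat O nv (fun a => Some (sg a)) (sl_out (cgso_base O) sg rho 1) F.
Proof.
split=> [[sg' [/(_ _)/Some_inj sgE]] | F_next]; last by exists sg.
by rewrite (functional_extensionality _ _ sgE).
Qed.

Lemma sl_sat_until_total (sg : Ag -> strategy V Ac) nv rho F1 F2 :
  sl_sat O nv (fun a => Some (sg a)) rho (SLUntil F1 F2) <->
  exists i, sl_sat O nv (fun a => Some (sg a)) (sl_out (cgso_base O) sg rho i) F2 /\
    forall j, j < i -> sl_sat O nv (fun a => Some (sg a)) (sl_out (cgso_base O) sg rho j) F1.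
Proof.
split=> [[sg' [/(_ _)/Some_inj sgE]] | F_until]; last by exists sg.
by rewrite (functional_extensionality _ _ sgE).
Qed.

End QuantifierBlocks.

Scheme atl_state_mind := Induction for atl_state Sort Prop
with atl_path_mind := Induction for atl_path Sort Prop.

Section Translation.

Variables (Ag : finType) (AP : Type) (V Ac : finType) (G : cgsi Ag AP V Ac).
Local Notation G0 := (cgsi_base G).
Implicit Types (A : {set Ag}) (sA sB sg : Ag -> strategy V Ac) (rho : seq V).

Lemma assign_on_combine A sA sB (nv : Ag -> option (strategy V Ac)) :
  assign_on [seq a <- enum Ag | a \notin A] sB (assign_on [seq a <- enum Ag | a \in A] sA nv) =
  fun y => Some (combine A sA sB y).
Proof.
apply: functional_extensionality => y.
rewrite /assign_on /combine !(@mem_filter _ _ _ (enum Ag)) mem_enum !andbT.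
by case: (y \in A).
Qed.

Lemma sl_sat_tr_coal A psi nv na rho :
  sl_sat (G' G) nv na rho (tr_s (ACoal A psi)) <->
  exists sA, (forall a, a \in A -> uniform (cgsi_obs G a) (sA a)) /\
    forall sB, sl_sat (G' G) (fun y => Some (combine A sA sB y))
                 (fun b => Some (combine A sA sB b)) rho (tr_p psi).
Proof.
have all_unif (s : strategy V Ac) : uniform (cgso_obs (G' G) None) s by exact: uniform_eq.
rewrite /= sl_sat_exists_block.
split=> -[sA [sA_unif sat_sA]]; exists sA; split.
- by move=> a aA; apply: sA_unif; rewrite mem_filter aA mem_enum.
- move=> sB; move/(sl_sat_forall_block _ _ _ _ _ all_unif)/(_ sB): sat_sA.
  by rewrite assign_on_combine sl_sat_bind_block assign_on_enum.
- by move=> a; rewrite mem_filter => /andP[aA _]; apply: sA_unif.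
- apply/(sl_sat_forall_block _ _ _ _ _ all_unif) => sB.
  by rewrite assign_on_combine sl_sat_bind_block assign_on_enum.
Qed.

Definition tr_s_correct (phi : atl_state Ag AP) : Prop :=
  forall rho nv na, rho != [::] ->
    atl_sat_s G rho phi <-> sl_sat (G' G) nv na rho (tr_s phi).

Definition tr_p_correct (psi : atl_path Ag AP) : Prop :=
  forall rho sg pi nv, rho != [::] -> outcome G0 sg rho pi ->
  forall j, atl_sat_p G pi ((size rho).-1 + j) psi <->
    sl_sat (G' G) nv (fun a => Some (sg a)) (sl_out G0 sg rho j) (tr_p psi).

Lemma tr_coal_correct A psi : tr_p_correct psi -> tr_s_correct (ACoal A psi).
Proof.
move=> psi_ok rho nv na rho_ne; rewrite sl_sat_tr_coal.
split=> -[sA [sA_unif sat_sA]]; exists sA; split=> //.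
  move=> sB; set sg := combine A sA sB.
  apply/(psi_ok rho sg _ _ rho_ne (outcome_play G0 sg rho_ne) 0); rewrite addn0.
  exact/sat_sA/atl_out_play.
move=> pi out_pi; have := sat_sA (completion G0 A sA pi).
by move/(psi_ok rho _ pi _ rho_ne (atl_out_outcome rho_ne out_pi) 0); rewrite addn0.
Qed.

Lemma tr_until_correct psi1 psi2 :
  tr_p_correct psi1 -> tr_p_correct psi2 -> tr_p_correct (PUntil psi1 psi2).
Proof.
move=> ok1 ok2 rho sg pi nv rho_ne out j /=.
have shift k : (size rho).-1 + j <= k -> exists m, k = (size rho).-1 + (m + j).
  by move=> le_k; exists (k - (size rho).-1 - j); lia.
split.
  case=> k [/shift [m ->] [sat2 sat1]]; apply/sl_sat_until_total.
  exists m; rewrite sl_out_add; split; first exact/(ok2 _ _ _ nv rho_ne out).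
  by move=> i lt_i; rewrite sl_out_add; apply/(ok1 _ _ _ nv rho_ne out); apply: sat1; lia.
move/sl_sat_until_total => [m [sat2 sat1]]; exists ((size rho).-1 + (m + j)).
split; first lia.
split; first by apply/(ok2 _ _ _ nv rho_ne out); rewrite -sl_out_add.
move=> k /andP[/shift [i ->] lt_k].
by apply/(ok1 _ _ _ nv rho_ne out); rewrite -sl_out_add; apply: sat1; lia.
Qed.

Lemma tr_correct phi : tr_s_correct phi.
Proof.
apply: (@atl_state_mind Ag AP tr_s_correct tr_p_correct).
- by [].
- by move=> f ok rho nv na rho_ne /=; rewrite (ok rho nv na rho_ne).
- move=> f1 ok1 f2 ok2 rho nv na rho_ne /=.
  by rewrite (ok1 rho nv na rho_ne) (ok2 rho nv na rho_ne).
- exact: tr_coal_correct.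
- move=> f ok rho sg pi nv rho_ne out j /=; rewrite out; exact/ok/sl_out_neq0.
- by move=> p ok rho sg pi nv rho_ne out j /=; rewrite (ok _ _ _ nv rho_ne out j).
- move=> p1 ok1 p2 ok2 rho sg pi nv rho_ne out j /=.
  by rewrite (ok1 _ _ _ nv rho_ne out j) (ok2 _ _ _ nv rho_ne out j).
- move=> p ok rho sg pi nv rho_ne out j.
  by rewrite sl_sat_next_total /= -addnS (ok _ _ _ nv rho_ne out j.+1).
- by move=> p1 ok1 p2 ok2; apply: tr_until_correct.
Qed.

End Translation.

Theorem proposition2 (Ag : finType) (AP : Type) (V Ac : finType)
    (G : cgsi Ag AP V Ac) (phi : atl_state Ag AP) :
  atl_models G phi <-> sl_models (G' G) (tr_s phi).
Proof. exact: tr_correct. Qed.
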